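(* Let $E,\tilde E$ be crossed module extensions of $\Pi_0$ with $\Pi_1$ and $\varphi:E\to\tilde E$ an extension equivalence. Let $(s^1,s^0)$ be a section system for $E$ and $(\tilde s^1,\tilde s^0)$ a section system for $\tilde E$ with $\tilde s^0=\varphi_0\circ s^0$ and $\varphi_1\circ s^1=\tilde s^1\circ\varphi_0|_{\mu(M_E)}$. Let $M$ be an abelian $\Pi_0$-module. Then the map $Z^2(\tilde E,M)\to Z^2(E,M)$, $\tilde z\mapsto\big((m,h,g)\mapsto\tilde z(\varphi_1(m),\varphi_0(h),\varphi_0(g))\big)$, restricts to an isomorphism $Z^2_{\mathrm{st},(\tilde s^1,\tilde s^0)}(\tilde E,M)\to Z^2_{\mathrm{st},(s^1,s^0)}(E,M)$, which induces isomorphisms $B^2_{\mathrm{st},(\tilde s^1,\tilde s^0)}(\tilde E,M)\to B^2_{\mathrm{st},(s^1,s^0)}(E,M)$ and $H^2_{\mathrm{st},(\tilde s^1,\tilde s^0)}(\tilde E,M)\to H^2_{\mathrm{st},(s^1,s^0)}(E,M)$.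
   Context: Let $\Pi_0$ be a group, $\Pi_1$ an abelian $\Pi_0$-module. A crossed module $(G,M_V,\mu)$: left action ${}^gm$, $\mu({}^gm)=g\mu(m)g^{-1}$, ${}^{\mu(n)}m=nmn^{-1}$. A crossed module extension $E$ of $\Pi_0$ with $\Pi_1$: crossed module $(G_E,M_E,\mu)$ with monomorphism $\iota:\Pi_1\to M_E$ and epimorphism $\pi:G_E\to\Pi_0$, exact sequence $\Pi_1\to M_E\to G_E\to\Pi_0$, ${}^g\iota(k)=\iota(\pi(g)k)$. An extension equivalence $\varphi:E\to\tilde E$ is a crossed module morphism, i.e. homomorphisms $\varphi_0:G_E\to G_{\tilde E}$, $\varphi_1:M_E\to M_{\tilde E}$ with $\mu\varphi_1=\varphi_0\mu$, $\varphi_1({}^gm)={}^{\varphi_0(g)}\varphi_1(m)$, such that $\varphi_1\iota=\tilde\iota$ and $\tilde\pi\varphi_0=\pi$. A section system for $E$: $s^0:\Pi_0\to G_E$ with $s^0(1)=1$, $\pi s^0=\mathrm{id}$, and $s^1:\mu(M_E)\to M_E$ with $s^1(1)=1$, $\mu s^1=\mathrm{id}$. Cochains of $E$ (with $\bar g=\pi(g)$, $M$ a $G_E$-module via $\pi$): $C^1=\mathrm{Map}(G_E,M)$, $C^2=\mathrm{Map}(M_E\times G_E\times G_E,M)$, $(dc)(m,h,g)=c(\mu(m)h)-c(hg)+\bar hc(g)$, $(dc)(p,n,k,m,h,g)=c(p,\mu(n)k,\mu(m)h)-c(pn,k,hg)+c(n\,{}^km,kh,g)-\bar kc(m,h,g)$.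 Pointed: $c(1)=0$ / $c(1,1,1)=0$. Standardisation w.r.t. $(s^1,s^0)$: for a pointed 2-cocycle $z$, $\sigma_z(g)=z(s^1(gs^0(\bar g)^{-1}),s^0(\bar g),1)$, $z^{\mathrm{std}}=z-d\sigma_z$. $Z^2_{\mathrm{st},(s^1,s^0)}$ = pointed cocycles with $z^{\mathrm{std}}=z$; $B^2_{\mathrm{st},(s^1,s^0)}=\{b\in B^2\cap C^2_{\mathrm{pt}}:b^{\mathrm{std}}=b\}$; $H^2_{\mathrm{st}}=Z^2_{\mathrm{st}}/B^2_{\mathrm{st}}$. *)

From HB Require Import structures.
From mathcomp Require Import all_boot all_algebra.
Set Implicit Arguments. Unset Strict Implicit. Unset Printing Implicit Defensive.
Import GRing.Theory.
Local Open Scope ring_scope.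

Record Grp := {
  gcar :> Type;
  gmul : gcar -> gcar -> gcar;
  ginv : gcar -> gcar;
  gone : gcar;
  gmulA : forall x y z, gmul x (gmul y z) = gmul (gmul x y) z;
  gmul1 : forall x, gmul x gone = x;
  g1mul : forall x, gmul gone x = x;
  gmulV : forall x, gmul x (ginv x) = gone;
  gVmul : forall x, gmul (ginv x) x = gone }.

Arguments gmul {g}. Arguments ginv {g}. Arguments gone {g}.

Definition is_ghom (A B : Grp) (f : A -> B) : Prop :=
  forall x y, f (gmul x y) = gmul (f x) (f y).

Record Module (P : Grp) := {
  mcar :> zmodType;
  mact : P -> mcar -> mcar;
  mact1 : forall a, mact gone a = a;
  mactM : forall x y a, mact (gmul x y) a = mact x (mact y a);
  mactD : forall x a b, mact x (a + b) = mact x a + mact x b }.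

Arguments mact {P m}.

Record CrossedModule := {
  cmG : Grp;
  cmM : Grp;
  cmact : cmG -> cmM -> cmM;
  cmmu : cmM -> cmG;
  cmact1 : forall m, cmact gone m = m;
  cmactM : forall g h m, cmact (gmul g h) m = cmact g (cmact h m);
  cmactD : forall g m n, cmact g (gmul m n) = gmul (cmact g m) (cmact g n);
  cmmu_hom : is_ghom cmmu;
  cmmu_act : forall g m, cmmu (cmact g m) = gmul (gmul g (cmmu m)) (ginv g);
  cmpeiffer : forall n m, cmact (cmmu n) m = gmul (gmul n m) (ginv n) }.

Arguments cmmu : clear implicits. Arguments cmact : clear implicits.

Record CMExt (Pi0 : Grp) (Pi1 : Module Pi0) := {
  xcm : CrossedModule;
  xiota : Pi1 -> cmM xcm;
  xpi : cmG xcm -> Pi0;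
  xiota_hom : forall a b, xiota (a + b) = gmul (xiota a) (xiota b);
  xiota_inj : forall a b, xiota a = xiota b -> a = b;
  xpi_hom : is_ghom xpi;
  xpi_surj : forall x, exists g, xpi g = x;
  xexact1 : forall m, cmmu xcm m = gone <-> exists k, xiota k = m;
  xexact2 : forall g, xpi g = gone <-> exists m, cmmu xcm m = g;
  xiota_act : forall g k, cmact xcm g (xiota k) = xiota (mact (xpi g) k) }.

Arguments xiota {Pi0 Pi1}. Arguments xpi {Pi0 Pi1}.

Notation GE E := (cmG (xcm E)).
Notation ME E := (cmM (xcm E)).
Notation muE E := (cmmu (xcm E)).
Notation actE E := (cmact (xcm E)).

Definition ext_equiv (Pi0 : Grp) (Pi1 : Module Pi0) (E Et : CMExt Pi1)
    (phi0 : GE E -> GE Et) (phi1 : ME E -> ME Et) : Prop :=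
  is_ghom phi0 /\ is_ghom phi1 /\
  (forall m, muE Et (phi1 m) = phi0 (muE E m)) /\
  (forall g m, phi1 (actE E g m) = actE Et (phi0 g) (phi1 m)) /\
  (forall k, phi1 (xiota E k) = xiota Et k) /\
  (forall g, xpi Et (phi0 g) = xpi E g).

(* Section system (s1, s0).  s1 is only specified on mu(M_E); it is
   represented as a total function G_E -> M_E whose values outside
   mu(M_E) are irrelevant (they are never used below). *)
Definition section_system (Pi0 : Grp) (Pi1 : Module Pi0) (E : CMExt Pi1)
    (s1 : GE E -> ME E) (s0 : Pi0 -> GE E) : Prop :=
  [/\ s0 gone = gone, forall x, xpi E (s0 x) = x,
      s1 gone = gone &
      forall g, (exists m, muE E m = g) -> muE E (s1 g) = g].

Section Cochains.
Variables (Pi0 : Grp) (Pi1 : Module Pi0) (E : CMExt Pi1) (M : Module Pi0).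

Definition C1 := GE E -> M.
Definition C2 := ME E -> GE E -> GE E -> M.

Definition d1 (c : C1) : C2 := fun m h g =>
  c (gmul (muE E m) h) - c (gmul h g) + mact (xpi E h) (c g).

Definition d2 (c : C2) (p n : ME E) (k : GE E) (m : ME E) (h g : GE E) : M :=
  c p (gmul (muE E n) k) (gmul (muE E m) h) - c (gmul p n) k (gmul h g)
  + c (gmul n (actE E k m)) (gmul k h) g - mact (xpi E k) (c m h g).

Definition cocycle2 (z : C2) : Prop := forall p n k m h g, d2 z p n k m h g = 0.
Definition coboundary2 (b : C2) : Prop :=
  exists c : C1, forall m h g, b m h g = d1 c m h g.
Definition pointed2 (z : C2) : Prop := z gone gone gone = 0.

Variables (s1 : GE E -> ME E) (s0 : Pi0 -> GE E).

Definition sigma_std (z : C2) : C1 := fun g =>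
  z (s1 (gmul g (ginv (s0 (xpi E g))))) (s0 (xpi E g)) gone.

Definition zstd (z : C2) : C2 := fun m h g => z m h g - d1 (sigma_std z) m h g.

Definition is_std (z : C2) : Prop := forall m h g, zstd z m h g = z m h g.

Definition Z2st (z : C2) : Prop := [/\ cocycle2 z, pointed2 z & is_std z].
Definition B2st (b : C2) : Prop := [/\ coboundary2 b, pointed2 b & is_std b].
End Cochains.

Definition pullback (Pi0 : Grp) (Pi1 : Module Pi0) (E Et : CMExt Pi1)
    (M : Module Pi0) (phi0 : GE E -> GE Et) (phi1 : ME E -> ME Et)
    (zt : C2 Et M) : C2 E M :=
  fun m h g => zt (phi1 m) (phi0 h) (phi0 g).

Definition sub2 (Pi0 : Grp) (Pi1 : Module Pi0) (E : CMExt Pi1) (M : Module Pi0)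
  (a b : C2 E M) : C2 E M := fun m h g => a m h g - b m h g.
Definition add2 (Pi0 : Grp) (Pi1 : Module Pi0) (E : CMExt Pi1) (M : Module Pi0)
  (a b : C2 E M) : C2 E M := fun m h g => a m h g + b m h g.

(* A pointed 2-cocycle z is determined by lam m := z(m,1,1) and w h g := z(1,h,g),
   through z(m,h,g) = lam m - w(mu m, h) + w(h,g); if z is standardized, it is
   even determined by lam on iota(Pi1) and by w on s0(Pi0) x s0(Pi0).  For a
   standardized cocycle of Et these arguments lie in the image of phi, which
   gives injectivity of the pullback.  For surjectivity, a cocycle z of E
   defines a group Y on M_Et x M x G_E that maps onto G_Et with kernel M
   (modulo an antidiagonal copy of M_E); the factor set of Y with respect to
   a section of Y -> G_Et adapted to (st1, st0) is a standardized cocycle of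
   Et whose pullback is z.  A standardized coboundary d c has c constant on
   the fibres of pi, hence is a pullback as well, and the statements on B^2
   and H^2 follow. *)

From Stdlib Require Import ClassicalEpsilon FunctionalExtensionality.
From HB Require Import structures.
From mathcomp Require Import all_boot all_algebra.
Set Implicit Arguments. Unset Strict Implicit. Unset Printing Implicit Defensive.
Import GRing.Theory.
Local Open Scope ring_scope.
Local Notation "x ⋆ y" := (gmul x y) (at level 40, left associativity).

Section GroupTheory.
Variable G : Grp.
Implicit Types x y z : G.

Lemma gmulKl x y : ginv x ⋆ (x ⋆ y) = y.
Proof. by rewrite gmulA gVmul g1mul. Qed.

Lemma gmulVKl x y : x ⋆ (ginv x ⋆ y) = y.
Proof. by rewrite gmulA gmulV g1mul. Qed.

Lemma gmulKr x y : y ⋆ x ⋆ ginv x = y.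
Proof. by rewrite -gmulA gmulV gmul1. Qed.

Lemma gmulVKr x y : y ⋆ ginv x ⋆ x = y.
Proof. by rewrite -gmulA gVmul gmul1. Qed.

Lemma gmulIl x y z : x ⋆ y = x ⋆ z -> y = z.
Proof. by move=> Exyz; rewrite -(gmulKl x y) Exyz gmulKl. Qed.

Lemma gmulIr x y z : y ⋆ x = z ⋆ x -> y = z.
Proof. by move=> Eyzx; rewrite -(gmulKr x y) Eyzx gmulKr. Qed.

Lemma ginv_uniq x y : x ⋆ y = gone -> y = ginv x.
Proof. by move=> Exy; apply: (@gmulIl x); rewrite Exy gmulV. Qed.

Lemma gone_uniq x y : x ⋆ y = y -> x = gone.
Proof. by move=> Exy; apply: (@gmulIr y); rewrite Exy g1mul. Qed.

Lemma ginv1 : ginv (@gone G) = gone.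
Proof. by symmetry; apply: ginv_uniq; rewrite gmul1. Qed.

Lemma ginvK x : ginv (ginv x) = x.
Proof. by symmetry; apply: ginv_uniq; rewrite gVmul. Qed.

Lemma ginvM x y : ginv (x ⋆ y) = ginv y ⋆ ginv x.
Proof. by symmetry; apply: ginv_uniq; rewrite gmulA gmulKr gmulV. Qed.

End GroupTheory.

Ltac gsimpl := rewrite ?ginvM ?ginvK ?ginv1 ?gmulA;
  do 4 rewrite ?gmulKr ?gmulVKr ?gmulV ?gVmul ?g1mul ?gmul1.

Section GroupMorphism.
Variables (A B : Grp) (f : A -> B).
Hypothesis f_hom : is_ghom f.

Lemma ghom1 : f gone = gone.
Proof. by apply: (@gone_uniq _ _ (f gone)); rewrite -f_hom gmul1. Qed.

Lemma ghomV x : f (ginv x) = ginv (f x).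
Proof. by apply: ginv_uniq; rewrite -f_hom gmulV ghom1. Qed.

End GroupMorphism.

Section CrossedModuleTheory.
Variable X : CrossedModule.

Lemma cmact_one g : cmact X g gone = gone.
Proof. by apply: (@gone_uniq _ _ (cmact X g gone)); rewrite -cmactD gmul1. Qed.

Lemma cmact_inv g m : cmact X g (ginv m) = ginv (cmact X g m).
Proof. by apply: ginv_uniq; rewrite -cmactD gmulV cmact_one. Qed.

Lemma cmmuM m n : cmmu X (m ⋆ n) = cmmu X m ⋆ cmmu X n.
Proof. exact: cmmu_hom. Qed.

Lemma cmmu1 : cmmu X gone = gone.
Proof. exact: ghom1 (@cmmu_hom X). Qed.

Lemma cmmuV m : cmmu X (ginv m) = ginv (cmmu X m).
Proof. by rewrite (ghomV (@cmmu_hom X)). Qed.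

End CrossedModuleTheory.

Section ModuleTheory.
Variables (P : Grp) (M : Module P).

Lemma mact0 x : mact x (0 : M) = 0.
Proof. by apply: (addrI (mact x (0 : M))); rewrite -mactD !addr0. Qed.

Lemma mactN x (a : M) : mact x (- a) = - mact x a.
Proof. by apply/eqP; rewrite -subr_eq0 opprK -mactD addNr mact0. Qed.

Lemma mactB x (a b : M) : mact x (a - b) = mact x a - mact x b.
Proof. by rewrite mactD mactN. Qed.

End ModuleTheory.

Section ExtensionTheory.
Variables (Pi0 : Grp) (Pi1 : Module Pi0) (X : CMExt Pi1).

Lemma xpiM g h : xpi X (g ⋆ h) = xpi X g ⋆ xpi X h.
Proof. exact: xpi_hom. Qed.

Lemma xpi1 : xpi X gone = gone.
Proof. exact: ghom1 (@xpi_hom _ _ X). Qed.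

Lemma xpiV g : xpi X (ginv g) = ginv (xpi X g).
Proof. by rewrite (ghomV (@xpi_hom _ _ X)). Qed.

Lemma xpi_mu m : xpi X (muE X m) = gone.
Proof. by apply/xexact2; exists m. Qed.

Lemma mact_xpi_mu (M : Module Pi0) m (a : M) : mact (xpi X (muE X m)) a = a.
Proof. by rewrite xpi_mu mact1. Qed.

Lemma xiota0 : xiota X 0 = gone.
Proof. by apply: (@gone_uniq _ _ (xiota X 0)); rewrite -xiota_hom addr0. Qed.

Lemma xiotaN k : xiota X (- k) = ginv (xiota X k).
Proof. by apply: ginv_uniq; rewrite -xiota_hom subrr xiota0. Qed.

Lemma mu_iota k : muE X (xiota X k) = gone.
Proof. by apply/xexact1; exists k. Qed.

Lemma act_mu n m : actE X (muE X n) m = n ⋆ m ⋆ ginv n.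
Proof. exact: cmpeiffer. Qed.

Lemma mu_act g m : muE X (actE X g m) = g ⋆ muE X m ⋆ ginv g.
Proof. exact: cmmu_act. Qed.

End ExtensionTheory.

Section SectionSystem.
Variables (Pi0 : Grp) (Pi1 : Module Pi0) (X : CMExt Pi1)
  (s1 : GE X -> ME X) (s0 : Pi0 -> GE X).
Hypothesis s_sys : section_system s1 s0.

Definition ker_coord (g : GE X) : ME X := s1 (g ⋆ ginv (s0 (xpi X g))).

Lemma s0_1 : s0 gone = gone. Proof. by case: s_sys. Qed.
Lemma pi_s0 x : xpi X (s0 x) = x. Proof. by case: s_sys. Qed.
Lemma s1_1 : s1 gone = gone. Proof. by case: s_sys. Qed.

Lemma mu_s1_ker g : xpi X g = gone -> muE X (s1 g) = g.
Proof. by case: s_sys => _ _ _ mu_s1 /xexact2; apply: mu_s1. Qed.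

Lemma mu_s1 m : muE X (s1 (muE X m)) = muE X m.
Proof. by rewrite mu_s1_ker // xpi_mu. Qed.

Lemma mu_ker_coord g : muE X (ker_coord g) = g ⋆ ginv (s0 (xpi X g)).
Proof. by rewrite mu_s1_ker // xpiM xpiV pi_s0 gmulV. Qed.

Lemma ker_coord_decomp g : g = muE X (ker_coord g) ⋆ s0 (xpi X g).
Proof. by rewrite mu_ker_coord gmulVKr. Qed.

Lemma ker_coord_s0 x : ker_coord (s0 x) = gone.
Proof. by rewrite /ker_coord pi_s0 gmulV s1_1. Qed.

Lemma ker_coord_mu m : ker_coord (muE X m) = s1 (muE X m).
Proof. by rewrite /ker_coord xpi_mu s0_1 ginv1 gmul1. Qed.

Lemma ker_coord_mu_ker_coord g : ker_coord (muE X (ker_coord g)) = ker_coord g.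
Proof. by rewrite ker_coord_mu {1}/ker_coord mu_ker_coord. Qed.

Lemma s1_iota_decomp m : exists k, m = s1 (muE X m) ⋆ xiota X k.
Proof.
have /xexact1 [k Ek] : muE X (ginv (s1 (muE X m)) ⋆ m) = gone.
  by rewrite cmmuM cmmuV mu_s1 gVmul.
by exists k; rewrite Ek gmulVKl.
Qed.

End SectionSystem.

Inductive zexpr := ZAtom of nat | ZAdd of zexpr & zexpr | ZOpp of zexpr | ZZero.

Section AbelianReflection.
Variable V : zmodType.

Fixpoint zeval (env : seq V) (e : zexpr) : V :=
  match e with
  | ZAtom n => nth 0 env n
  | ZAdd a b => zeval env a + zeval env b
  | ZOpp a => - zeval env a
  | ZZero => 0
  end.

Fixpoint zcoef (i : nat) (e : zexpr) : int :=
  match e with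
  | ZAtom n => if n == i then 1 else 0
  | ZAdd a b => zcoef i a + zcoef i b
  | ZOpp a => - zcoef i a
  | ZZero => 0
  end.

Lemma zeval_sum env e : zeval env e = \sum_(i < size env) nth 0 env i *~ zcoef i e.
Proof.
elim: e => [n|a IHa b IHb|a IHa|] /=.
- have [ltn_env | ge_env] := ltnP n (size env).
    rewrite (bigD1 (Ordinal ltn_env)) //= eqxx mulr1z big1 ?addr0 // => j neq_j.
    by case: eqP => // nj; case/eqP: neq_j; apply: val_inj.
  rewrite nth_default // big1 // => j _.
  by case: eqP => [nj|]; [move: (ltn_ord j); rewrite -nj ltnNge ge_env | rewrite mulr0z].
- by rewrite IHa IHb -big_split; apply: eq_bigr => i _; rewrite mulrzDr.
- by rewrite IHa -sumrN; apply: eq_bigr => i _; rewrite mulrNz.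
- by rewrite big1 // => i _; rewrite mulr0z.
Qed.

Lemma zeval_eq0 env e :
  all (fun i => zcoef i e == 0) (iota 0 (size env)) -> zeval env e = 0.
Proof.
move=> /allP coef0; rewrite zeval_sum big1 // => i _.
by have := coef0 i; rewrite mem_iota add0n ltn_ord => /(_ isT) /eqP ->; rewrite mulr0z.
Qed.

Lemma abel_sub (x e : V) : e = 0 -> x - e = 0 -> x = 0.
Proof. by move=> ->; rewrite subr0. Qed.

Lemma abel_add (x e : V) : e = 0 -> x + e = 0 -> x = 0.
Proof. by move=> ->; rewrite addr0. Qed.

Lemma eq_subr0 (a b : V) : a = b -> a - b = 0.
Proof. by move=> ->; rewrite subrr. Qed.

End AbelianReflection.

Ltac zlookup x env :=
  lazymatch env with
  | ?y :: ?e => match y with x => constr:(0%N) | _ => let n := zlookup x e in constr:(S n) end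
  end.

Ltac zmem x env :=
  lazymatch env with
  | nil => constr:(false)
  | ?y :: ?e => match y with x => constr:(true) | _ => zmem x e end
  end.

Ltac zatoms t env :=
  lazymatch t with
  | GRing.add ?a ?b => let e := zatoms a env in zatoms b e
  | GRing.opp ?a => zatoms a env
  | GRing.zero => env
  | _ => lazymatch zmem t env with true => env | false => constr:(t :: env) end
  end.

Ltac zreify t env :=
  lazymatch t with
  | GRing.add ?a ?b => let x := zreify a env in let y := zreify b env in constr:(ZAdd x y)
  | GRing.opp ?a => let x := zreify a env in constr:(ZOpp x)
  | GRing.zero => constr:(ZZero)
  | _ => let n := zlookup t env in constr:(ZAtom n)
  end.

Ltac abel0 :=
  lazymatch goal with |- @eq ?V ?t 0 =>
    let env := zatoms t (@nil V) in
    let e := zreify t env in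
    change (zeval env e = 0); apply: zeval_eq0; vm_compute; reflexivity
  end.

(* [abel_with (H1, ..., Hn)] proves an identity [a = b] in a zmodType when
   [a - b] is a combination with coefficients +1/-1 of the equations [Hi]. *)
Ltac abel_using Hs :=
  lazymatch Hs with
  | tt => abel0
  | (?Hs', ?H) =>
    let H0 := lazymatch type of H with _ = 0 => H | _ => constr:(eq_subr0 H) end in
    first [ apply: (abel_sub H0); abel_using Hs' | apply: (abel_add H0); abel_using Hs' ]
  | ?H => abel_using (tt, H)
  end.

Ltac abel_with Hs :=
  lazymatch goal with |- _ = 0 => idtac | |- _ = _ => apply: subr0_eq end;
  abel_using Hs.

Ltac abel := abel_with tt.

Ltac cm_simpl := do 3 rewrite ?cmmu1 ?g1mul ?gmul1 ?cmact_one ?cmact1 ?xpi1 ?mact1.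

Section NormalForm.
Variables (Pi0 : Grp) (Pi1 : Module Pi0) (X : CMExt Pi1) (M : Module Pi0).
Implicit Types (lam : ME X -> M) (w : GE X -> GE X -> M).

Definition group_cocycle w := forall k h g,
  w k h - w k (h ⋆ g) + w (k ⋆ h) g - mact (xpi X k) (w h g) = 0.

Definition twisted_mul lam w := forall p n,
  lam (p ⋆ n) = lam p + lam n - w (muE X p) (muE X n).

Definition twisted_act lam w := forall k m h,
  w k (muE X m ⋆ h) - w k h + lam (actE X k m) - w (muE X (actE X k m)) (k ⋆ h)
  - mact (xpi X k) (lam m) + mact (xpi X k) (w (muE X m) h) = 0.

Definition nf_cochain lam w : C2 X M := fun m h g => lam m - w (muE X m) h + w h g.

Lemma nf_cochain_cocycle lam w :
  group_cocycle w -> twisted_mul lam w -> twisted_act lam w -> cocycle2 (nf_cochain lam w).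
Proof.
move=> w_cocycle lam_mul lam_act p n k m h g; rewrite /d2 /nf_cochain !cmmuM !lam_mul.
have E1 := w_cocycle (muE X p) (muE X n) k.
have E2 := w_cocycle (muE X n) k (muE X m ⋆ h).
have E3 := w_cocycle (muE X n) (muE X (actE X k m)) (k ⋆ h).
have E4 := w_cocycle k h g.
have E5 := lam_act k m h.
have Ekmh : muE X (actE X k m) ⋆ (k ⋆ h) = k ⋆ (muE X m ⋆ h).
  by rewrite mu_act -!gmulA gmulKl.
rewrite Ekmh in E3; rewrite !mact_xpi_mu in E1 E2 E3; rewrite !mactD !mactN.
abel_with (E1, E2, E3, E4, E5).
Qed.

End NormalForm.

Section PointedCocycle.
Variables (Pi0 : Grp) (Pi1 : Module Pi0) (X : CMExt Pi1) (M : Module Pi0) (z : C2 X M).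
Hypotheses (z_cocycle : cocycle2 z) (z_pointed : pointed2 z).

Local Notation w h g := (z gone h g).
Local Notation lam m := (z m gone gone).

Lemma cocycle_w1l g : w gone g = 0.
Proof.
have := z_cocycle gone gone gone gone gone g; rewrite /d2; cm_simpl.
by rewrite z_pointed sub0r addNr sub0r => /eqP; rewrite oppr_eq0 => /eqP.
Qed.

Lemma cocycle_w1r k : w k gone = 0.
Proof.
have := z_cocycle gone gone k gone gone gone; rewrite /d2; cm_simpl.
by rewrite z_pointed mact0 subr0 subrr add0r.
Qed.

Lemma cocycle_nf_r m h g : z m h g = z m h gone + w h g.
Proof.
have := z_cocycle m gone h gone gone g; rewrite /d2; cm_simpl.
by rewrite cocycle_w1l mact0 subr0 => E; abel_with E.
Qed.

Lemma cocycle_nf_l m h : z m h gone = lam m - w (muE X m) h.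
Proof.
have := z_cocycle gone m gone gone h gone; rewrite /d2; cm_simpl.
by rewrite cocycle_w1r (cocycle_nf_r m gone h) cocycle_w1l => E; abel_with E.
Qed.

Lemma cocycle_nf m h g : z m h g = lam m - w (muE X m) h + w h g.
Proof. by rewrite cocycle_nf_r cocycle_nf_l. Qed.

Lemma cocycle_w_cocycle : group_cocycle (fun h g => w h g).
Proof. by move=> k h g; have := z_cocycle gone gone k gone h g; rewrite /d2; cm_simpl. Qed.

Lemma cocycle_lam_mul : twisted_mul (fun m => lam m) (fun h g => w h g).
Proof.
move=> p n; have := z_cocycle p n gone gone gone gone; rewrite /d2; cm_simpl.
by rewrite z_pointed cocycle_nf_l => E; abel_with E.
Qed.

Lemma cocycle_lam_act : twisted_act (fun m => lam m) (fun h g => w h g).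
Proof.
move=> k m h; have := z_cocycle gone gone k m h gone; rewrite /d2; cm_simpl.
by rewrite (cocycle_nf_l (actE X k m)) (cocycle_nf_l m) mactB => E; abel_with E.
Qed.

End PointedCocycle.

Section Standardization.
Variables (Pi0 : Grp) (Pi1 : Module Pi0) (X : CMExt Pi1) (M : Module Pi0)
  (s1 : GE X -> ME X) (s0 : Pi0 -> GE X).
Hypothesis s_sys : section_system s1 s0.

Lemma sigma0_is_std (z : C2 X M) : (forall g, sigma_std s1 s0 z g = 0) -> is_std s1 s0 z.
Proof. by move=> sigma0 m h g; rewrite /zstd /d1 !sigma0 mact0 subrr addr0 subr0. Qed.

Section StandardCocycle.
Variable z : C2 X M.
Hypotheses (z_cocycle : cocycle2 z) (z_pointed : pointed2 z) (z_std : is_std s1 s0 z).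
Local Notation w h g := (z gone h g).
Local Notation lam m := (z m gone gone).

(* [d1 sigma] vanishes, so [sigma] is constant on [mu(M)]-cosets, and it
   vanishes on the representatives [s0 x]. *)
Lemma is_std_sigma0 g : sigma_std s1 s0 z g = 0.
Proof.
have d1_sigma0 m h g' : d1 (sigma_std s1 s0 z) m h g' = 0.
  by have := z_std m h g'; rewrite /zstd => E; abel_with E.
have sigma1 : sigma_std s1 s0 z gone = 0.
  by have := d1_sigma0 gone gone gone; rewrite /d1; cm_simpl; rewrite subrr add0r.
have sigma_mu a h : sigma_std s1 s0 z (muE X a ⋆ h) = sigma_std s1 s0 z h.
  have := d1_sigma0 a h gone; rewrite /d1 gmul1 sigma1 mact0 addr0.
  by move/eqP; rewrite subr_eq0 => /eqP.
rewrite (ker_coord_decomp s_sys g) sigma_mu /sigma_std (pi_s0 s_sys) gmulV.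
by rewrite (s1_1 s_sys) cocycle_w1r.
Qed.

Lemma std_lam_ker_coord g :
  lam (ker_coord s1 s0 g) = w (muE X (ker_coord s1 s0 g)) (s0 (xpi X g)).
Proof. by apply/subr0_eq; rewrite -cocycle_nf_l //; apply: is_std_sigma0. Qed.

Hypothesis lam_iota0 : forall k, lam (xiota X k) = 0.
Hypothesis w_s0_eq0 : forall x y, w (s0 x) (s0 y) = 0.

Lemma std_lam0 m : lam m = 0.
Proof.
have lam_s1 n : lam (s1 (muE X n)) = 0.
  by have := is_std_sigma0 (muE X n); rewrite /sigma_std xpi_mu (s0_1 s_sys) ginv1 gmul1.
have [k ->] := s1_iota_decomp s_sys m.
by rewrite cocycle_lam_mul // mu_iota cocycle_w1r // lam_s1 lam_iota0 !add0r oppr0.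
Qed.

Lemma std_w_mu g a : w (muE X a) g = 0.
Proof.
have w_mu_s0 c y : w (muE X c) (s0 y) = 0.
  have := is_std_sigma0 (muE X c ⋆ s0 y).
  rewrite /sigma_std xpiM xpi_mu g1mul (pi_s0 s_sys) gmulKr cocycle_nf_l //.
  by rewrite (mu_s1 s_sys) std_lam0 sub0r => /eqP; rewrite oppr_eq0 => /eqP.
have w_mu_mu p n : w (muE X p) (muE X n) = 0.
  by have := cocycle_lam_mul z_cocycle z_pointed p n; rewrite !std_lam0 !add0r => E; abel_with E.
rewrite (ker_coord_decomp s_sys g).
have := cocycle_w_cocycle z_cocycle (muE X a) (muE X (ker_coord s1 s0 g)) (s0 (xpi X g)).
by rewrite -cmmuM !w_mu_s0 w_mu_mu mact0 => E; abel_with E.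
Qed.

Lemma std_w_s0 x g : w (s0 x) g = 0.
Proof.
have w_s0_mu b : w (s0 x) (muE X b) = 0.
  have := cocycle_lam_act z_cocycle z_pointed (s0 x) b gone.
  by rewrite !gmul1 cocycle_w1r // !std_lam0 std_w_mu cocycle_w1r // mact0 => E; abel_with E.
rewrite (ker_coord_decomp s_sys g); set b := ker_coord s1 s0 g; set y := xpi X g.
have Ex : s0 x ⋆ muE X b = muE X (actE X (s0 x) b) ⋆ s0 x by rewrite mu_act gmulVKr.
have := cocycle_w_cocycle z_cocycle (s0 x) (muE X b) (s0 y).
have := cocycle_w_cocycle z_cocycle (muE X (actE X (s0 x) b)) (s0 x) (s0 y).
by rewrite -Ex !std_w_mu w_s0_mu w_s0_eq0 !mact0 => E1 E2; abel_with (E1, E2).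
Qed.

Lemma std_cocycle_eq0 m h g : z m h g = 0.
Proof.
have w0 h' g' : w h' g' = 0.
  rewrite (ker_coord_decomp s_sys h').
  have := cocycle_w_cocycle z_cocycle (muE X (ker_coord s1 s0 h')) (s0 (xpi X h')) g'.
  by rewrite !std_w_mu std_w_s0 !mact0 => E; abel_with E.
by rewrite cocycle_nf // std_lam0 !w0 subrr addr0.
Qed.

End StandardCocycle.

Lemma sub2_cocycle (a b : C2 X M) : cocycle2 a -> cocycle2 b -> cocycle2 (sub2 a b).
Proof.
move=> a_cocycle b_cocycle p n k m h g.
have := a_cocycle p n k m h g; have := b_cocycle p n k m h g.
by rewrite /d2 /sub2 mactB => Eb Ea; abel_with (Ea, Eb).
Qed.

Lemma sub2_Z2st (a b : C2 X M) : Z2st s1 s0 a -> Z2st s1 s0 b -> Z2st s1 s0 (sub2 a b).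
Proof.
case=> a_cocycle a_pointed a_std [b_cocycle b_pointed b_std]; split.
- exact: sub2_cocycle.
- by rewrite /pointed2 /sub2 a_pointed b_pointed subrr.
- apply: sigma0_is_std => g; rewrite /sigma_std /sub2.
  have := is_std_sigma0 a_cocycle a_pointed a_std g.
  have := is_std_sigma0 b_cocycle b_pointed b_std g.
  by rewrite /sigma_std => -> ->; rewrite subrr.
Qed.

Lemma d1_cocycle (c : C1 X M) : cocycle2 (d1 c).
Proof.
move=> p n k m h g; rewrite /d2 /d1 !cmmuM mu_act !xpiM !xpi_mu !g1mul !mactM !mactD ?mactN.
by gsimpl; abel.
Qed.

Lemma B2st_Z2st (b : C2 X M) : B2st s1 s0 b -> Z2st s1 s0 b.
Proof.
case=> [[c Ebc] b_pointed b_std]; split=> //.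
by move=> p n k m h g; rewrite /d2 !Ebc; apply: d1_cocycle.
Qed.

End Standardization.

(* The 2-cocycle of a group [Y] over [G_X], relative to set-theoretic
   sections: [tau] identifies the kernel of [q] equivariantly with [M]. *)
Section ExtensionCocycle.
Variables (Pi0 : Grp) (Pi1 : Module Pi0) (X : CMExt Pi1) (M : Module Pi0) (Y : Grp)
  (q : Y -> GE X) (tau : Y -> M) (L : ME X -> Y) (s : GE X -> Y).
Hypotheses (q_hom : is_ghom q) (L_hom : is_ghom L).
Hypothesis tau_mul : forall x y, q x = gone -> q y = gone -> tau (x ⋆ y) = tau x + tau y.
Hypothesis tau_conj :
  forall y x, q x = gone -> tau (y ⋆ x ⋆ ginv y) = mact (xpi X (q y)) (tau x).
Hypotheses (q_L : forall m, q (L m) = muE X m) (q_s : forall g, q (s g) = g).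
Hypothesis L_act : forall y m, L (actE X (q y) m) = y ⋆ L m ⋆ ginv y.

Definition ext_factor (h g : GE X) : Y := s h ⋆ s g ⋆ ginv (s (h ⋆ g)).
Definition ext_w (h g : GE X) : M := tau (ext_factor h g).
Definition ext_lfactor (m : ME X) : Y := L m ⋆ ginv (s (muE X m)).
Definition ext_lam (m : ME X) : M := - tau (ext_lfactor m).

Lemma tau1 : tau gone = 0.
Proof.
have q1 : q gone = gone by exact: ghom1.
by have := tau_mul q1 q1; rewrite gmul1 => E; abel_with E.
Qed.

Ltac ker_q := rewrite ?q_hom ?(ghomV q_hom) ?q_s ?q_L ?mu_act; gsimpl.

Lemma q_conj_ker y x : q x = gone -> q (y ⋆ x ⋆ ginv y) = gone.
Proof. by move=> qx; rewrite !q_hom qx gmul1 (ghomV q_hom) gmulV. Qed.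

Lemma q_ext_factor h g : q (ext_factor h g) = gone.
Proof. by rewrite /ext_factor; ker_q. Qed.

Lemma q_ext_lfactor m : q (ext_lfactor m) = gone.
Proof. by rewrite /ext_lfactor; ker_q. Qed.

Lemma ext_w_cocycle : group_cocycle ext_w.
Proof.
move=> k h g; rewrite /ext_w.
have Ef : s k ⋆ ext_factor h g ⋆ ginv (s k) ⋆ ext_factor k (h ⋆ g)
          = ext_factor k h ⋆ ext_factor (k ⋆ h) g.
  by rewrite /ext_factor; gsimpl.
have := congr1 tau Ef.
rewrite (tau_mul (q_conj_ker _ (q_ext_factor h g)) (q_ext_factor _ _)).
rewrite (tau_mul (q_ext_factor _ _) (q_ext_factor _ _)) (tau_conj _ (q_ext_factor h g)) q_s.
by move=> E; abel_with E.
Qed.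

Lemma ext_lam_mul : twisted_mul ext_lam ext_w.
Proof.
move=> p n; rewrite /ext_lam /ext_w.
have Ef : ext_lfactor (p ⋆ n) = ext_lfactor p
    ⋆ (s (muE X p) ⋆ ext_lfactor n ⋆ ginv (s (muE X p))) ⋆ ext_factor (muE X p) (muE X n).
  by rewrite /ext_lfactor /ext_factor L_hom cmmuM; gsimpl.
rewrite Ef (tau_mul _ (q_ext_factor _ _)); last first.
  by rewrite q_hom q_ext_lfactor q_conj_ker ?q_ext_lfactor ?gmul1.
rewrite (tau_mul (q_ext_lfactor _) (q_conj_ker _ (q_ext_lfactor _))).
by rewrite (tau_conj _ (q_ext_lfactor _)) q_s mact_xpi_mu; abel.
Qed.

Lemma ext_lam_act : twisted_act ext_lam ext_w.
Proof.
move=> k m h; rewrite /ext_lam /ext_w mactN.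
set u := muE X m; set v := muE X (actE X k m).
have Ev : v ⋆ (k ⋆ h) = k ⋆ (u ⋆ h) by rewrite /v /u mu_act; gsimpl.
pose t := s k ⋆ s u ⋆ ginv (s k) ⋆ ginv (s v).
have q_t : q t = gone by rewrite /t /v /u; ker_q.
have E1 : s k ⋆ s u ⋆ s h ⋆ ginv (s (k ⋆ (u ⋆ h)))
    = s k ⋆ ext_factor u h ⋆ ginv (s k) ⋆ ext_factor k (u ⋆ h).
  by rewrite /ext_factor; gsimpl.
have E2 : s k ⋆ s u ⋆ s h ⋆ ginv (s (k ⋆ (u ⋆ h)))
    = t ⋆ (s v ⋆ ext_factor k h ⋆ ginv (s v)) ⋆ ext_factor v (k ⋆ h).
  by rewrite /t /ext_factor Ev; gsimpl.
have E3 : ext_lfactor (actE X k m) = s k ⋆ ext_lfactor m ⋆ ginv (s k) ⋆ t.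
  by rewrite /ext_lfactor -{1}(q_s k) L_act /t; gsimpl.
have := congr1 tau (etrans (esym E1) E2).
rewrite (tau_mul (q_conj_ker _ (q_ext_factor _ _)) (q_ext_factor _ _)) (tau_conj _ (q_ext_factor _ _)).
rewrite (tau_mul _ (q_ext_factor _ _)); last by rewrite q_hom q_t q_conj_ker ?q_ext_factor ?gmul1.
rewrite (tau_mul q_t (q_conj_ker _ (q_ext_factor _ _))) (tau_conj _ (q_ext_factor _ _)).
rewrite !q_s /v xpi_mu mact1 => Etau.
have := congr1 tau E3.
rewrite (tau_mul (q_conj_ker _ (q_ext_lfactor _)) q_t) (tau_conj _ (q_ext_lfactor _)) q_s => Elam.
by abel_with (Etau, Elam).
Qed.

Definition ext_cocycle : C2 X M := nf_cochain ext_lam ext_w.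

Lemma ext_cocycle_cocycle : cocycle2 ext_cocycle.
Proof. exact: nf_cochain_cocycle ext_w_cocycle ext_lam_mul ext_lam_act. Qed.

Variables (s1 : GE X -> ME X) (s0 : Pi0 -> GE X).
Hypotheses (s_sys : section_system s1 s0) (s_1 : s gone = gone).
Hypothesis s_adapted : forall g, s g = L (ker_coord s1 s0 g) ⋆ s (s0 (xpi X g)).

Lemma ext_w1r k : ext_w k gone = 0.
Proof. by rewrite /ext_w /ext_factor gmul1 s_1 gmul1 gmulV tau1. Qed.

Lemma ext_cocycle_pointed : pointed2 ext_cocycle.
Proof.
rewrite /pointed2 /ext_cocycle /nf_cochain /ext_lam /ext_lfactor cmmu1 s_1 ginv1 gmul1.
by rewrite (ghom1 L_hom) tau1 oppr0 ext_w1r subrr addr0.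
Qed.

Lemma ext_cocycle_std : is_std s1 s0 ext_cocycle.
Proof.
apply: sigma0_is_std => g; rewrite /sigma_std -/(ker_coord s1 s0 g).
set a := ker_coord s1 s0 g.
have s_mu_a : s (muE X a) = L a.
  by rewrite s_adapted ker_coord_mu_ker_coord // xpi_mu (s0_1 s_sys) s_1 gmul1.
rewrite /ext_cocycle /nf_cochain ext_w1r addr0 /ext_lam /ext_lfactor s_mu_a gmulV tau1.
rewrite /ext_w /ext_factor s_mu_a -(ker_coord_decomp s_sys) -s_adapted gmulV tau1.
by rewrite oppr0 addr0.
Qed.

End ExtensionCocycle.

Section ExtensionEquivalence.
Variables (Pi0 : Grp) (Pi1 : Module Pi0) (E Et : CMExt Pi1)
  (phi0 : GE E -> GE Et) (phi1 : ME E -> ME Et).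
Hypothesis phi_equiv : ext_equiv phi0 phi1.

Lemma phi0M x y : phi0 (x ⋆ y) = phi0 x ⋆ phi0 y.
Proof. by case: phi_equiv. Qed.
Lemma phi1M x y : phi1 (x ⋆ y) = phi1 x ⋆ phi1 y.
Proof. by case: phi_equiv => _ []. Qed.
Lemma phi_mu m : muE Et (phi1 m) = phi0 (muE E m).
Proof. by case: phi_equiv => _ [_ []]. Qed.
Lemma phi_act g m : phi1 (actE E g m) = actE Et (phi0 g) (phi1 m).
Proof. by case: phi_equiv => _ [_ [_ []]]. Qed.
Lemma phi_iota k : phi1 (xiota E k) = xiota Et k.
Proof. by case: phi_equiv => _ [_ [_ [_ []]]]. Qed.
Lemma phi_pi g : xpi Et (phi0 g) = xpi E g.
Proof. by case: phi_equiv => _ [_ [_ [_ []]]]. Qed.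
Lemma phi0_1 : phi0 gone = gone. Proof. exact: ghom1 phi0M. Qed.
Lemma phi1_1 : phi1 gone = gone. Proof. exact: ghom1 phi1M. Qed.
Lemma phi1V x : phi1 (ginv x) = ginv (phi1 x). Proof. by rewrite (ghomV phi1M). Qed.

Variables (s1 : GE E -> ME E) (s0 : Pi0 -> GE E) (st1 : GE Et -> ME Et) (st0 : Pi0 -> GE Et).
Hypothesis s_sys : section_system s1 s0.
Hypothesis st0_phi : forall x, st0 x = phi0 (s0 x).
Hypothesis st1_phi : forall g, (exists m, muE E m = g) -> phi1 (s1 g) = st1 (phi0 g).

Lemma ker_coord_phi h : ker_coord st1 st0 (phi0 h) = phi1 (ker_coord s1 s0 h).
Proof.
rewrite /ker_coord phi_pi st0_phi -(ghomV phi0M) -phi0M.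
by rewrite st1_phi //; apply/xexact2; rewrite xpiM xpiV (pi_s0 s_sys) gmulV.
Qed.

End ExtensionEquivalence.

(* Given a pointed 2-cocycle [z] of [E], the group [Y] on [M_Et * M * G_E]
   with [(m, a, g) (m', a', g') = (m ^(phi0 g) m', a + g a' + z(1, g, g'), g g')].
   Modulo the elements [((phi1 n)^-1, - z(n, 1, 1), mu n)] it is an extension
   of [G_Et] by [M], through which [z] is transported to [Et]. *)
Section TransportGroup.
Variables (Pi0 : Grp) (Pi1 : Module Pi0) (E Et : CMExt Pi1)
  (phi0 : GE E -> GE Et) (phi1 : ME E -> ME Et) (M : Module Pi0) (z : C2 E M).
Hypotheses (phi_equiv : ext_equiv phi0 phi1) (z_cocycle : cocycle2 z) (z_pointed : pointed2 z).
Local Notation w h g := (z gone h g).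
Local Notation lam m := (z m gone gone).

Definition ycar := (ME Et * M * GE E)%type.

Definition ymul (x y : ycar) : ycar :=
  (x.1.1 ⋆ actE Et (phi0 x.2) y.1.1, x.1.2 + mact (xpi E x.2) y.1.2 + w x.2 y.2, x.2 ⋆ y.2).

Definition yone : ycar := (gone, 0, gone).

Definition yinv (x : ycar) : ycar :=
  (actE Et (phi0 (ginv x.2)) (ginv x.1.1),
   - mact (xpi E (ginv x.2)) (x.1.2 + w x.2 (ginv x.2)), ginv x.2).

Ltac ysimpl := do 2 rewrite ?(phi0_1 phi_equiv) ?(phi1_1 phi_equiv) ?cmact1 ?cmact_one
  ?gmul1 ?g1mul ?xpi1 ?mact1 ?mact0 ?z_pointed ?(cocycle_w1l z_cocycle z_pointed)
  ?(cocycle_w1r z_cocycle z_pointed) ?addr0 ?add0r ?ginv1 ?cmmu1 ?oppr0.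

Lemma ymulA x y t : ymul x (ymul y t) = ymul (ymul x y) t.
Proof.
case: x => [[m1 a1] g1]; case: y => [[m2 a2] g2]; case: t => [[m3 a3] g3].
rewrite /ymul /=; congr (_, _, _).
- by rewrite cmactD (phi0M phi_equiv) cmactM gmulA.
- have := cocycle_w_cocycle z_cocycle g1 g2 g3.
  by rewrite !mactD xpiM mactM => Ew; abel_with Ew.
- by rewrite gmulA.
Qed.

Lemma ymul1 x : ymul x yone = x.
Proof. by case: x => [[m a] g]; rewrite /ymul /=; ysimpl. Qed.

Lemma y1mul x : ymul yone x = x.
Proof. by case: x => [[m a] g]; rewrite /ymul /=; ysimpl. Qed.

Lemma ymulV x : ymul x (yinv x) = yone.
Proof.
case: x => [[m a] g]; rewrite /ymul /yinv /=; congr (_, _, _).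
- by rewrite -cmactM -(phi0M phi_equiv) gmulV (phi0_1 phi_equiv) cmact1 gmulV.
- by rewrite mactN -mactM -xpiM gmulV xpi1 mact1; abel.
- by rewrite gmulV.
Qed.

Lemma yVmul x : ymul (yinv x) x = yone.
Proof.
case: x => [[m a] g]; rewrite /ymul /yinv /=; congr (_, _, _).
- by rewrite -cmactD gVmul cmact_one.
- have := cocycle_w_cocycle z_cocycle (ginv g) g (ginv g).
  rewrite gmulV gVmul cocycle_w1r // cocycle_w1l // mactD => Ew; abel_with Ew.
- by rewrite gVmul.
Qed.

Definition ygrp : Grp := Build_Grp ymulA ymul1 y1mul ymulV yVmul.

Lemma ymulE (x y : ygrp) : x ⋆ y = ymul x y. Proof. by []. Qed.

Definition y_of_M (a : M) : ygrp := (gone, a, gone).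
Definition y_of_ME (n : ME E) : ygrp := (ginv (phi1 n), - lam n, muE E n).
Definition y_of_GE (g : GE E) : ygrp := (gone, 0, g).
Definition y_of_MEt (m : ME Et) : ygrp := (m, 0, gone).
Definition yproj (y : ygrp) : GE Et := muE Et y.1.1 ⋆ phi0 y.2.

Lemma y_of_M_mul a b : y_of_M a ⋆ y_of_M b = y_of_M (a + b).
Proof. by rewrite ymulE /ymul /=; ysimpl. Qed.

Lemma y_of_ME_mul n n' : y_of_ME n ⋆ y_of_ME n' = y_of_ME (n ⋆ n').
Proof.
rewrite ymulE /ymul /y_of_ME /=; congr (_, _, _).
- by rewrite -(phi_mu phi_equiv) act_mu (phi1M phi_equiv) ginvM; gsimpl.
- by rewrite mact_xpi_mu cocycle_lam_mul //; abel.
- by rewrite cmmuM.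
Qed.

Lemma y_of_ME1 : y_of_ME gone = gone.
Proof. by rewrite /y_of_ME; ysimpl. Qed.

Lemma y_of_MEV n : ginv (y_of_ME n) = y_of_ME (ginv n).
Proof. by symmetry; apply: ginv_uniq; rewrite y_of_ME_mul gmulV y_of_ME1. Qed.

Lemma y_of_GE_mul h g : y_of_GE h ⋆ y_of_GE g = y_of_M (w h g) ⋆ y_of_GE (h ⋆ g).
Proof. by rewrite !ymulE /ymul /=; ysimpl. Qed.

Lemma y_of_MEt_hom : is_ghom y_of_MEt.
Proof. by move=> m n; rewrite ymulE /ymul /=; ysimpl. Qed.

Lemma yconj_M (y : ygrp) b : y ⋆ y_of_M b = y_of_M (mact (xpi E y.2) b) ⋆ y.
Proof.
case: y => [[m a] g]; rewrite !ymulE /ymul /=; ysimpl.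
by rewrite addrC.
Qed.

Lemma y_of_ME_M_comm n b : y_of_ME n ⋆ y_of_M b = y_of_M b ⋆ y_of_ME n.
Proof. by rewrite yconj_M [y_of_ME n]/y_of_ME mact_xpi_mu. Qed.

Lemma yconj_ME (y : ygrp) n : y ⋆ y_of_ME n = y_of_ME (actE E y.2 n) ⋆ y.
Proof.
case: y => [[m a] g]; rewrite !ymulE /ymul /y_of_ME /=; congr (_, _, _).
- by rewrite -(phi_mu phi_equiv) act_mu (phi_act phi_equiv) cmact_inv; gsimpl.
- have := cocycle_lam_act z_cocycle z_pointed g n gone.
  by rewrite !gmul1 !(cocycle_w1r z_cocycle z_pointed) mact0 mactN mact_xpi_mu => Ew; abel_with Ew.
- by rewrite mu_act gmulVKr.
Qed.

Lemma yproj_hom : is_ghom yproj.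
Proof.
by case=> [[m a] g] [[m' a'] g']; rewrite ymulE /ymul /yproj /= cmmuM mu_act (phi0M phi_equiv); gsimpl.
Qed.

Lemma xpi_yproj y : xpi Et (yproj y) = xpi E y.2.
Proof. by rewrite /yproj xpiM xpi_mu g1mul (phi_pi phi_equiv). Qed.

Lemma yproj_M a : yproj (y_of_M a) = gone.
Proof. by rewrite /yproj /=; ysimpl. Qed.

Lemma yproj_ME n : yproj (y_of_ME n) = gone.
Proof. by rewrite /yproj /= cmmuV (phi_mu phi_equiv) gVmul. Qed.

Lemma yproj_GE g : yproj (y_of_GE g) = phi0 g.
Proof. by rewrite /yproj /= cmmu1 g1mul. Qed.

Lemma yproj_MEt m : yproj (y_of_MEt m) = muE Et m.
Proof. by rewrite /yproj /=; ysimpl. Qed.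

Lemma y_of_MEt_act y m : y_of_MEt (actE Et (yproj y) m) = y ⋆ y_of_MEt m ⋆ ginv y.
Proof.
apply: (@gmulIr _ y); rewrite gmulVKr.
case: y => [[m' a] g]; rewrite !ymulE /ymul /yproj /=; ysimpl.
by rewrite cmactM act_mu gmulVKr.
Qed.

Lemma yproj_ker y : yproj y = gone -> exists b n, y = y_of_M b ⋆ y_of_ME n.
Proof.
case: y => [[m a] g]; rewrite /yproj /= => Emg.
have /xexact2 [n0 En0] : xpi E g = gone.
  by rewrite -(phi_pi phi_equiv) (ginv_uniq Emg) xpiV xpi_mu ginv1.
have /xexact1 [k Ek] : muE Et (m ⋆ phi1 n0) = gone by rewrite cmmuM (phi_mu phi_equiv) En0.
exists (a + lam (n0 ⋆ xiota E (- k))), (n0 ⋆ xiota E (- k)).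
rewrite /y_of_M /y_of_ME /= /ymul /=; ysimpl; congr (_, _, _).
- by rewrite (phi1M phi_equiv) (phi_iota phi_equiv) ginvM xiotaN ginvK Ek gmulKr.
- by abel.
- by rewrite cmmuM mu_iota gmul1.
Qed.

Lemma y_of_M_ME_inj b b' n n' : y_of_M b ⋆ y_of_ME n = y_of_M b' ⋆ y_of_ME n' -> b = b'.
Proof.
rewrite !ymulE /ymul /y_of_M /y_of_ME /=; ysimpl; case=> Ephi Ea Emu.
have /xexact1 [k Ek] : muE E (ginv n ⋆ n') = gone by rewrite cmmuM cmmuV Emu gVmul.
have /(@xiota_inj _ _ Et) k0 : xiota Et k = xiota Et 0.
  rewrite -(phi_iota phi_equiv) Ek (phi1M phi_equiv) (phi1V phi_equiv) xiota0.
  by rewrite -[phi1 n']ginvK -Ephi ginvK gVmul.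
have En : n' = n by rewrite -(gmulVKl n n') -Ek k0 xiota0 gmul1.
by move: Ea; rewrite En => /addIr.
Qed.

(* Meaningful only on the kernel of [yproj], see [ycoord_spec]. *)
Definition ycoord (y : ygrp) : M :=
  epsilon (inhabits 0) (fun b => exists n, y = y_of_M b ⋆ y_of_ME n).

Lemma ycoord_spec y : yproj y = gone -> exists n, y = y_of_M (ycoord y) ⋆ y_of_ME n.
Proof. by move=> /yproj_ker; apply: epsilon_spec. Qed.

Lemma ycoord_eq b n : ycoord (y_of_M b ⋆ y_of_ME n) = b.
Proof.
have /ycoord_spec [n' En'] : yproj (y_of_M b ⋆ y_of_ME n) = gone.
  by rewrite yproj_hom yproj_M yproj_ME gmul1.
by symmetry; apply: y_of_M_ME_inj En'.
Qed.


Lemma ycoord_mul x y :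
  yproj x = gone -> yproj y = gone -> ycoord (x ⋆ y) = ycoord x + ycoord y.
Proof.
move=> /ycoord_spec [n Ex] /ycoord_spec [n' Ey].
rewrite {1}Ex {1}Ey -gmulA (gmulA (y_of_ME n)) y_of_ME_M_comm.
by rewrite -!gmulA gmulA y_of_M_mul y_of_ME_mul ycoord_eq.
Qed.

Lemma ycoord_conj y x :
  yproj x = gone -> ycoord (y ⋆ x ⋆ ginv y) = mact (xpi Et (yproj y)) (ycoord x).
Proof.
move=> /ycoord_spec [n Ex].
rewrite {1}Ex gmulA yconj_M -(gmulA _ y) yconj_ME -!gmulA gmulV gmul1 ycoord_eq.
by rewrite xpi_yproj.
Qed.

Lemma y_of_GE_conj_ME h n : y_of_GE h ⋆ y_of_ME n = y_of_ME (actE E h n) ⋆ y_of_GE h.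
Proof. exact: yconj_ME. Qed.

Lemma y_of_ME_MEt m : y_of_ME m ⋆ y_of_MEt (phi1 m) = y_of_M (- lam m) ⋆ y_of_GE (muE E m).
Proof.
rewrite !ymulE /ymul /=; ysimpl.
by rewrite -(phi_mu phi_equiv) act_mu; gsimpl.
Qed.

Variables (s1 : GE E -> ME E) (s0 : Pi0 -> GE E) (st1 : GE Et -> ME Et) (st0 : Pi0 -> GE Et).
Hypotheses (s_sys : section_system s1 s0) (st_sys : section_system st1 st0).
Hypothesis st0_phi : forall x, st0 x = phi0 (s0 x).
Hypothesis st1_phi : forall g, (exists m, muE E m = g) -> phi1 (s1 g) = st1 (phi0 g).

Definition ysec (g : GE Et) : ygrp :=
  y_of_MEt (ker_coord st1 st0 g) ⋆ y_of_GE (s0 (xpi Et g)).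

Lemma yproj_ysec g : yproj (ysec g) = g.
Proof.
by rewrite yproj_hom yproj_MEt yproj_GE -st0_phi -(ker_coord_decomp st_sys).
Qed.

Lemma ysec1 : ysec gone = gone.
Proof.
rewrite /ysec /ker_coord xpi1 (s0_1 s_sys) (s0_1 st_sys) ginv1 gmul1 (s1_1 st_sys).
by rewrite gmul1.
Qed.

Lemma ysec_adapted g : ysec g = y_of_MEt (ker_coord st1 st0 g) ⋆ ysec (st0 (xpi Et g)).
Proof. by rewrite /ysec (ker_coord_s0 st_sys) (pi_s0 st_sys) -[y_of_MEt gone]/(gone : ygrp) g1mul. Qed.

Definition transport_cocycle : C2 Et M := ext_cocycle ycoord y_of_MEt ysec.

Lemma transport_Z2st : Z2st st1 st0 transport_cocycle.
Proof.
split.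
- exact: ext_cocycle_cocycle yproj_hom y_of_MEt_hom ycoord_mul ycoord_conj yproj_MEt yproj_ysec y_of_MEt_act.
- exact: ext_cocycle_pointed yproj_hom y_of_MEt_hom ycoord_mul ysec1.
- exact: (ext_cocycle_std yproj_hom ycoord_mul st_sys ysec1 ysec_adapted).
Qed.

Hypothesis z_std : is_std s1 s0 z.

Lemma ysec_phi h : ysec (phi0 h) = ginv (y_of_ME (ker_coord s1 s0 h)) ⋆ y_of_GE h.
Proof.
apply: (@gmulIl _ (y_of_ME (ker_coord s1 s0 h))); rewrite gmulVKl.
rewrite /ysec (ker_coord_phi phi_equiv s_sys st0_phi st1_phi) (phi_pi phi_equiv) gmulA y_of_ME_MEt -gmulA y_of_GE_mul.
rewrite -(std_lam_ker_coord s_sys z_cocycle z_pointed z_std) -(ker_coord_decomp s_sys).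
by rewrite gmulA y_of_M_mul addNr; apply: g1mul.
Qed.

Lemma transport_w_phi h g : ext_w ycoord ysec (phi0 h) (phi0 g) = w h g.
Proof.
rewrite /ext_w /ext_factor -(phi0M phi_equiv) !ysec_phi.
set a := ker_coord s1 s0 h; set b := ker_coord s1 s0 g; set c := ker_coord s1 s0 (h ⋆ g).
have -> : ginv (y_of_ME a) ⋆ y_of_GE h ⋆ (ginv (y_of_ME b) ⋆ y_of_GE g)
            ⋆ ginv (ginv (y_of_ME c) ⋆ y_of_GE (h ⋆ g))
          = y_of_ME (ginv a) ⋆ (y_of_GE h ⋆ y_of_ME (ginv b) ⋆ ginv (y_of_GE h))
            ⋆ (y_of_GE h ⋆ y_of_GE g ⋆ ginv (y_of_GE (h ⋆ g))) ⋆ y_of_ME c.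
  by gsimpl; rewrite !y_of_MEV.
rewrite y_of_GE_conj_ME y_of_GE_mul !gmulKr y_of_ME_mul y_of_ME_M_comm -gmulA y_of_ME_mul.
exact: ycoord_eq.
Qed.

Lemma transport_lam_phi m : ext_lam ycoord y_of_MEt ysec (phi1 m) = lam m.
Proof.
rewrite /ext_lam /ext_lfactor (phi_mu phi_equiv) ysec_phi.
have -> : y_of_MEt (phi1 m) = ginv (y_of_ME m) ⋆ (y_of_M (- lam m) ⋆ y_of_GE (muE E m)).
  by rewrite -y_of_ME_MEt gmulKl.
rewrite ginvM ginvK !gmulA gmulKr y_of_MEV y_of_ME_M_comm -gmulA y_of_ME_mul.
by rewrite ycoord_eq opprK.
Qed.

Lemma transport_cocycle_phi m h g : transport_cocycle (phi1 m) (phi0 h) (phi0 g) = z m h g.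
Proof.
rewrite /transport_cocycle /ext_cocycle /nf_cochain (phi_mu phi_equiv) transport_lam_phi.
by rewrite !transport_w_phi [RHS](cocycle_nf z_cocycle z_pointed).
Qed.

End TransportGroup.

Section Pullback.
Variables (Pi0 : Grp) (Pi1 : Module Pi0) (E Et : CMExt Pi1)
  (phi0 : GE E -> GE Et) (phi1 : ME E -> ME Et)
  (s1 : GE E -> ME E) (s0 : Pi0 -> GE E) (st1 : GE Et -> ME Et) (st0 : Pi0 -> GE Et)
  (M : Module Pi0).
Hypotheses (phi_equiv : ext_equiv phi0 phi1)
  (s_sys : section_system s1 s0) (st_sys : section_system st1 st0).
Hypothesis st0_phi : forall x, st0 x = phi0 (s0 x).
Hypothesis st1_phi : forall g, (exists m, muE E m = g) -> phi1 (s1 g) = st1 (phi0 g).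
Local Notation Phi := (pullback (M := M) phi0 phi1).

Lemma pullback_cocycle zt : cocycle2 zt -> cocycle2 (Phi zt).
Proof.
move=> zt_cocycle p n k m h g.
have := zt_cocycle (phi1 p) (phi1 n) (phi0 k) (phi1 m) (phi0 h) (phi0 g).
by rewrite /d2 /pullback !(phi_mu phi_equiv) -!(phi0M phi_equiv) -(phi_act phi_equiv)
  -!(phi1M phi_equiv) (phi_pi phi_equiv).
Qed.

Lemma pullback_pointed zt : pointed2 zt -> pointed2 (Phi zt).
Proof. by rewrite /pointed2 /pullback (phi0_1 phi_equiv) (phi1_1 phi_equiv). Qed.

Lemma pullback_std zt : Z2st st1 st0 zt -> is_std s1 s0 (Phi zt).
Proof.
case=> zt_cocycle zt_pointed zt_std; apply: sigma0_is_std => g.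
have := is_std_sigma0 st_sys zt_cocycle zt_pointed zt_std (phi0 g).
rewrite /sigma_std -/(ker_coord st1 st0 (phi0 g)) (ker_coord_phi phi_equiv s_sys st0_phi st1_phi).
by rewrite (phi_pi phi_equiv) st0_phi -(phi0_1 phi_equiv).
Qed.

Lemma pullback_Z2st zt : Z2st st1 st0 zt -> Z2st s1 s0 (Phi zt).
Proof.
move=> zt_Z2st; case: (zt_Z2st) => zt_cocycle zt_pointed _; split.
- exact: pullback_cocycle.
- exact: pullback_pointed.
- exact: pullback_std.
Qed.

(* A standardized cocycle of [Et] is determined by its values on [iota(Pi1)]
   and on [st0(Pi0)], which lie in the image of [phi]. *)
Lemma pullback_Z2st_inj zt1 zt2 : Z2st st1 st0 zt1 -> Z2st st1 st0 zt2 ->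
  (forall m h g, Phi zt1 m h g = Phi zt2 m h g) -> forall m h g, zt1 m h g = zt2 m h g.
Proof.
move=> zt1_Z2st zt2_Z2st Ezt m h g; apply: subr0_eq.
have [d_cocycle d_pointed d_std] := sub2_Z2st st_sys zt1_Z2st zt2_Z2st.
apply: (std_cocycle_eq0 st_sys d_cocycle d_pointed d_std) => [k | x y]; rewrite /sub2.
- by rewrite -(phi_iota phi_equiv k) -(phi0_1 phi_equiv); apply/eq_subr0/Ezt.
- by rewrite !st0_phi -(phi1_1 phi_equiv); apply/eq_subr0/Ezt.
Qed.

Lemma pullback_Z2st_surj z : Z2st s1 s0 z ->
  exists zt, Z2st st1 st0 zt /\ forall m h g, Phi zt m h g = z m h g.
Proof.
case=> z_cocycle z_pointed z_std.
exists (transport_cocycle phi_equiv z_cocycle z_pointed s0 st1 st0); split.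
- exact: transport_Z2st s_sys st_sys st0_phi.
- exact: transport_cocycle_phi s_sys st0_phi st1_phi z_std.
Qed.

Lemma pullback_B2st bt : B2st st1 st0 bt -> B2st s1 s0 (Phi bt).
Proof.
move=> bt_B2st; have [[c Ebt] bt_pointed _] := bt_B2st; split.
- exists (fun g => c (phi0 g)) => m h g.
  by rewrite /pullback Ebt /d1 (phi_mu phi_equiv) -!(phi0M phi_equiv) (phi_pi phi_equiv).
- exact: pullback_pointed.
- exact: pullback_std (B2st_Z2st bt_B2st).
Qed.

(* A standardized coboundary [d1 c] has [c] constant on [mu(M)]-cosets, so it
   is the pullback of [d1 (c \o s0 \o pi)]. *)
Lemma pullback_B2st_surj b : B2st s1 s0 b ->
  exists bt, B2st st1 st0 bt /\ forall m h g, Phi bt m h g = b m h g.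
Proof.
move=> b_B2st; have [[c Eb] b_pointed b_std] := b_B2st.
have [b_cocycle _ _] := B2st_Z2st b_B2st.
have c1 : c gone = 0.
  by move: b_pointed; rewrite /pointed2 Eb /d1 cmmu1 !g1mul xpi1 mact1 subrr add0r.
have c_s0 g : c g = c (s0 (xpi E g)).
  have := is_std_sigma0 s_sys b_cocycle b_pointed b_std g.
  rewrite /sigma_std Eb /d1 -/(ker_coord s1 s0 g) (mu_ker_coord s_sys) gmulVKr gmul1 c1.
  by rewrite mact0 addr0 => /subr0_eq.
pose ct g := c (s0 (xpi Et g)).
exists (d1 ct); split; first split.
- by exists ct.
- by rewrite /pointed2 /d1 /ct cmmu1 !g1mul xpi1 mact1 (s0_1 s_sys) c1 subrr add0r.
- apply: sigma0_is_std => g.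
  rewrite /sigma_std /d1 /ct xpiM xpi_mu g1mul gmul1 !(pi_s0 st_sys) xpi1 (s0_1 s_sys) c1.
  by rewrite mact0 subrr addr0.
- move=> m h g; rewrite /pullback /d1 Eb /d1 /ct (phi_mu phi_equiv) -!(phi0M phi_equiv).
  by rewrite !(phi_pi phi_equiv) (c_s0 (muE E m ⋆ h)) (c_s0 (h ⋆ g)) (c_s0 g) xpiM xpi_mu g1mul.
Qed.

Lemma pullback_B2st_sub zt1 zt2 : Z2st st1 st0 zt1 -> Z2st st1 st0 zt2 ->
  B2st st1 st0 (sub2 zt1 zt2) <-> B2st s1 s0 (sub2 (Phi zt1) (Phi zt2)).
Proof.
move=> zt1_Z2st zt2_Z2st; split; first exact: pullback_B2st.
move=> /pullback_B2st_surj [bt [bt_B2st Ebt]].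
have Ed := pullback_Z2st_inj (B2st_Z2st bt_B2st) (sub2_Z2st st_sys zt1_Z2st zt2_Z2st) Ebt.
suff <- : bt = sub2 zt1 zt2 by [].
by do 3 (apply: functional_extensionality => ?); apply: Ed.
Qed.

End Pullback.

Theorem proposition4p11 (Pi0 : Grp) (Pi1 : Module Pi0) (E Et : CMExt Pi1)
    (phi0 : GE E -> GE Et) (phi1 : ME E -> ME Et)
    (s1 : GE E -> ME E) (s0 : Pi0 -> GE E)
    (st1 : GE Et -> ME Et) (st0 : Pi0 -> GE Et)
    (M : Module Pi0) :
  ext_equiv phi0 phi1 ->
  section_system s1 s0 ->
  section_system st1 st0 ->
  (forall x, st0 x = phi0 (s0 x)) ->
  (forall g, (exists m, muE E m = g) -> phi1 (s1 g) = st1 (phi0 g)) ->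
  let Phi := pullback (M := M) phi0 phi1 in
  (forall zt1 zt2 m h g, Phi (add2 zt1 zt2) m h g = add2 (Phi zt1) (Phi zt2) m h g) /\
  (forall zt, Z2st st1 st0 zt -> Z2st s1 s0 (Phi zt)) /\
  (forall zt1 zt2, Z2st st1 st0 zt1 -> Z2st st1 st0 zt2 ->
     (forall m h g, Phi zt1 m h g = Phi zt2 m h g) ->
     forall m h g, zt1 m h g = zt2 m h g) /\
  (forall z, Z2st s1 s0 z ->
     exists zt, Z2st st1 st0 zt /\ forall m h g, Phi zt m h g = z m h g) /\
  (forall bt, B2st st1 st0 bt -> B2st s1 s0 (Phi bt)) /\
  (forall bt1 bt2, B2st st1 st0 bt1 -> B2st st1 st0 bt2 ->
     (forall m h g, Phi bt1 m h g = Phi bt2 m h g) ->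
     forall m h g, bt1 m h g = bt2 m h g) /\
  (forall b, B2st s1 s0 b ->
     exists bt, B2st st1 st0 bt /\ forall m h g, Phi bt m h g = b m h g) /\
  (forall zt1 zt2, Z2st st1 st0 zt1 -> Z2st st1 st0 zt2 ->
     (B2st st1 st0 (sub2 zt1 zt2) <-> B2st s1 s0 (sub2 (Phi zt1) (Phi zt2)))).
Proof.
move=> phi_equiv s_sys st_sys st0_phi st1_phi Phi.
split=> //.
split; first by move=> zt; apply: pullback_Z2st.
split; first by move=> zt1 zt2; apply: pullback_Z2st_inj.
split; first by move=> z; apply: pullback_Z2st_surj.
split; first by move=> bt; apply: pullback_B2st.
split; first by move=> bt1 bt2 /B2st_Z2st bt1_Z2st /B2st_Z2st; apply: pullback_Z2st_inj.
split; first by move=> b; apply: pullback_B2st_surj.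
by move=> zt1 zt2; apply: pullback_B2st_sub.
Qed.
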